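(* Let $\bar\mu=(\mu,\mu_1,\mu_2)\in\{+,-\}^3$ and let $\mathfrak m_{\bar\mu}$ be the multiplier satisfying $R_\mu\mathcal N_{\bar\mu}(R^{-1}_{\mu_1}G_1,R^{-1}_{\mu_2}G_2)=Q_{\bar\mu}[\mathfrak m_{\bar\mu}](G_1,G_2)$ for all scalar $G_1,G_2$. Then $Q_{\bar\mu}[\mathfrak m_{\bar\mu}](G_1,G_2)$ is a finite linear combination (with constant coefficients) of bilinear expressions of the form $$|\nabla|e^{-\mu it\Lambda}D_0\big[(D_1e^{\mu_1it\Lambda}G_1)\cdot(D_2e^{\mu_2it\Lambda}G_2)\big],$$ where each of $D_0,D_1,D_2$ is a product of operators from $\{\Lambda,\sqrt{1-\Lambda^2},\partial_1/|\nabla_h|,\partial_2/|\nabla_h|\}$. The same statement holds with these expressions replaced by $e^{-\mu it\Lambda}D_0[(D_1e^{\mu_1it\Lambda}G_1)\cdot(|\nabla|D_2e^{\mu_2it\Lambda}G_2)]$.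
   Context: $\hat f(\xi)=\int f(x)e^{-ix\cdot\xi}dx$. $\Lambda(\xi)=\xi_3/|\xi|$; $\Lambda$, $\sqrt{1-\Lambda^2}$, $e^{\pm it\Lambda}$ denote the Fourier multipliers with symbols $\Lambda(\xi)$, $\sqrt{1-\Lambda(\xi)^2}$, $e^{\pm it\Lambda(\xi)}$; $\nabla_h=(\partial_1,\partial_2)$. $\mathbb P_L=\mathrm{Id}-\nabla\Delta^{-1}\nabla\cdot$, $\mathbb P_\pm=\frac12(\mathrm{Id}\pm|\nabla|^{-1}\nabla\times)$. $\mathcal N_{\bar\mu}(\vec g_1,\vec g_2)=-e^{-\mu it\Lambda}\mathbb P_\mu\mathbb P_L\nabla\cdot(e^{\mu_1it\Lambda}\vec g_1\otimes e^{\mu_2it\Lambda}\vec g_2)$, $(\vec a\otimes\vec b)_{ij}=a_ib_j$, $(\nabla\cdot M)_j=\sum_i\partial_iM_{ij}$. $R_\pm\vec v=\frac12\vec e_3\cdot(|\nabla_h|^{-1}\nabla\times\vec v\pm|\nabla||\nabla_h|^{-1}\vec v)$; for scalar $G$, $\widehat{R^{-1}_\pm G}(\xi)=-i\hat G(\xi)(\vec\Gamma_1\pm i\vec\Gamma_2)$ with $\vec\Gamma_1=(-\xi_2/|\xi_h|,\xi_1/|\xi_h|,0)$, $\vec\Gamma_2=\frac{\xi}{|\xi|}\times\vec\Gamma_1$. $\mathcal F\{Q_{\bar\mu}[\mathfrak m](f_1,f_2)\}(\xi)=(2\pi)^{-3}\int e^{it\Phi_{\bar\mu}(\xi,\eta)}\mathfrak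 m(\xi,\eta)\hat f_1(\xi-\eta)\hat f_2(\eta)d\eta$, $\Phi_{\bar\mu}=-\mu\Lambda(\xi)+\mu_1\Lambda(\xi-\eta)+\mu_2\Lambda(\eta)$. *)

From Stdlib Require Import Reals List.
From Coquelicot Require Import Coquelicot.
Import ListNotations.
Open Scope R_scope.

(** Frequencies in R^3 and complex 3-vectors (values of vector symbols). *)
Record R3 := mkR3 { x1 : R; x2 : R; x3 : R }.
Record C3 := mkC3 { z1 : C; z2 : C; z3 : C }.

Definition R3sub (a b : R3) : R3 := mkR3 (x1 a - x1 b) (x2 a - x2 b) (x3 a - x3 b).

Definition nrm (xi : R3) : R := sqrt (x1 xi ^ 2 + x2 xi ^ 2 + x3 xi ^ 2).
Definition nrmh (xi : R3) : R := sqrt (x1 xi ^ 2 + x2 xi ^ 2).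

Inductive sgn := Pl | Mi.
Definition sv (s : sgn) : R := match s with Pl => 1 | Mi => -1 end.

(** Symbols of the scalar Fourier multipliers (convention f^(xi)=∫ f e^{-ix.xi},
    so d_j has symbol i xi_j). *)
Definition Lam (xi : R3) : R := x3 xi / nrm xi.
Inductive Op := OLam | OSqrt | OD1 | OD2.
Definition opsym (o : Op) (xi : R3) : C :=
  match o with
  | OLam => RtoC (Lam xi)
  | OSqrt => RtoC (sqrt (1 - Lam xi ^ 2))
  | OD1 => (Ci * RtoC (x1 xi / nrmh xi))%C
  | OD2 => (Ci * RtoC (x2 xi / nrmh xi))%C
  end.
Definition wsym (w : list Op) (xi : R3) : C :=
  fold_right (fun o acc => Cmult (opsym o xi) acc) (RtoC 1) w.

Definition cadd (u v : C3) : C3 := mkC3 (z1 u + z1 v)%C (z2 u + z2 v)%C (z3 u + z3 v)%C.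
Definition cscal (c : C) (u : C3) : C3 := mkC3 (c * z1 u)%C (c * z2 u)%C (c * z3 u)%C.
Definition cdot (u v : C3) : C := (z1 u * z1 v + z2 u * z2 v + z3 u * z3 v)%C.
Definition ccross (u v : C3) : C3 :=
  mkC3 (z2 u * z3 v - z3 u * z2 v)%C (z3 u * z1 v - z1 u * z3 v)%C
       (z1 u * z2 v - z2 u * z1 v)%C.
Definition toC3 (xi : R3) : C3 := mkC3 (RtoC (x1 xi)) (RtoC (x2 xi)) (RtoC (x3 xi)).

Definition Gam1 (xi : R3) : C3 :=
  mkC3 (RtoC (- x2 xi / nrmh xi)) (RtoC (x1 xi / nrmh xi)) (RtoC 0).
Definition Gam2 (xi : R3) : C3 := ccross (cscal (RtoC (/ nrm xi)) (toC3 xi)) (Gam1 xi).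

Definition Rinv_sym (s : sgn) (xi : R3) : C3 :=
  cscal (- Ci)%C (cadd (Gam1 xi) (cscal (RtoC (sv s) * Ci)%C (Gam2 xi))).

(** P_L = Id - nabla Delta^{-1} nabla. : v ↦ v - xi (xi.v)/|xi|^2 *)
Definition PL_sym (xi : R3) (v : C3) : C3 :=
  cadd v (cscal (- (cdot (toC3 xi) v) / RtoC (nrm xi ^ 2))%C (toC3 xi)).
(** P_s = 1/2 (Id ± |nabla|^{-1} nabla x) : v ↦ 1/2 (v ± |xi|^{-1} i xi × v) *)
Definition Ps_sym (s : sgn) (xi : R3) (v : C3) : C3 :=
  cscal (RtoC (/ 2))
    (cadd v (cscal (RtoC (sv s / nrm xi) * Ci)%C (ccross (toC3 xi) v))).
(** R_s v = 1/2 e_3.(|nabla_h|^{-1} nabla × v ± |nabla||nabla_h|^{-1} v) *)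
Definition Rs_sym (s : sgn) (xi : R3) (v : C3) : C :=
  (RtoC (/ 2) *
   (z3 (cscal (Ci / RtoC (nrmh xi))%C (ccross (toC3 xi) v))
    + RtoC (sv s * nrm xi / nrmh xi) * z3 v))%C.

(** The bilinear symbol m_{mu bar}(xi, eta) of
    R_mu N_{mu bar}(R^{-1}_{mu1} G1, R^{-1}_{mu2} G2), with the common factor
    (2pi)^{-3} e^{it Phi} removed.  Divergence: (nabla.(a ⊗ b))_j has symbol
    i (xi . a(xi-eta)) b_j(eta). *)
Definition msym (mu mu1 mu2 : sgn) (xi eta : R3) : C :=
  let a := Rinv_sym mu1 (R3sub xi eta) in
  let b := Rinv_sym mu2 eta in
  Rs_sym mu xi
    (cscal (- RtoC 1)%C
       (Ps_sym mu xi (PL_sym xi (cscal (Ci * cdot (toC3 xi) a)%C b)))).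

(** frequencies where all symbols are defined (a.e.) *)
Definition admissible (xi eta : R3) : Prop :=
  nrmh xi <> 0 /\ nrmh eta <> 0 /\ nrmh (R3sub xi eta) <> 0.

Definition term := (C * list Op * list Op * list Op)%type.
Definition sum_form1 (L : list term) (xi eta : R3) : C :=
  fold_right (fun t acc =>
    let '(c, w0, w1, w2) := t in
    (c * RtoC (nrm xi) * wsym w0 xi * wsym w1 (R3sub xi eta) * wsym w2 eta + acc)%C)
    (RtoC 0) L.
Definition sum_form2 (L : list term) (xi eta : R3) : C :=
  fold_right (fun t acc =>
    let '(c, w0, w1, w2) := t in
    (c * wsym w0 xi * wsym w1 (R3sub xi eta) * (RtoC (nrm eta) * wsym w2 eta) + acc)%C)
    (RtoC 0) L.

(* Where |ξ_h|, |η_h| and |(ξ-η)_h| are nonzero, write each frequency v as |v| times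
   (sin θ cos φ, sin θ sin φ, cos θ).  The four spherical coordinates cos φ, sin φ,
   cos θ, sin θ are the symbols of -i∂_1/|∇_h|, -i∂_2/|∇_h|, Λ and √(1-Λ²), and
   Γ_1 = e_φ, Γ_2 = -e_θ.  So R^{-1}_± is polynomial in the coordinates, and so are
   P_L and P_± once the |v| factors cancel.  The factor |ξ|/|ξ_h| = 1/sin θ in R_μ
   cancels as well, because the third component of P_L u is divisible by sin θ.
   Hence m = i (ξ·a) K(ξ, b), where a and b are the symbols of R^{-1}_{μ1} at ξ-η
   and R^{-1}_{μ2} at η, and K is polynomial.  Pulling |ξ| out of ξ gives the first
   form.  Since (ξ-η)·R^{-1}(ξ-η) = 0, we may replace ξ·a by η·a
   and pull out |η| instead, which gives the second.  Polynomials in the coordinates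
   of ξ, ξ-η and η are exactly the finite sums of products D_0(ξ) D_1(ξ-η) D_2(η). *)

From Stdlib Require Import Reals List Lra.
From Coquelicot Require Import Coquelicot.
Import ListNotations.
Open Scope R_scope.

Definition tsum (L : list term) (xi eta : R3) : C :=
  fold_right (fun t acc =>
    let '(c, w0, w1, w2) := t in
    (c * wsym w0 xi * wsym w1 (R3sub xi eta) * wsym w2 eta + acc)%C)
    (RtoC 0) L.

Lemma sum_form1_tsum L xi eta : sum_form1 L xi eta = (RtoC (nrm xi) * tsum L xi eta)%C.
Proof. induction L as [|[[[c w0] w1] w2] L IH]; simpl; [ring | rewrite IH; ring]. Qed.

Lemma sum_form2_tsum L xi eta : sum_form2 L xi eta = (RtoC (nrm eta) * tsum L xi eta)%C.
Proof. induction L as [|[[[c w0] w1] w2] L IH]; simpl; [ring | rewrite IH; ring]. Qed.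

Lemma wsym_app w w' xi : wsym (w ++ w') xi = (wsym w xi * wsym w' xi)%C.
Proof. induction w as [|o w IH]; simpl; [ring | rewrite IH; ring]. Qed.

Lemma tsum_app L L' xi eta : tsum (L ++ L') xi eta = (tsum L xi eta + tsum L' xi eta)%C.
Proof. induction L as [|[[[c w0] w1] w2] L IH]; simpl; [ring | rewrite IH; ring]. Qed.

Definition tmul (t t' : term) : term :=
  let '(c, w0, w1, w2) := t in
  let '(c', w0', w1', w2') := t' in
  ((c * c')%C, w0 ++ w0', w1 ++ w1', w2 ++ w2').

Lemma tsum_map_tmul t L xi eta :
  tsum (map (tmul t) L) xi eta = (tsum [t] xi eta * tsum L xi eta)%C.
Proof.
  destruct t as [[[c w0] w1] w2].
  induction L as [|[[[c' w0'] w1'] w2'] L IH]; simpl in *; [ring|].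
  rewrite IH, !wsym_app; ring.
Qed.

Lemma tsum_mul L L' xi eta :
  tsum (flat_map (fun t => map (tmul t) L') L) xi eta = (tsum L xi eta * tsum L' xi eta)%C.
Proof.
  induction L as [|t L IH]; simpl; [ring|].
  rewrite tsum_app, IH, tsum_map_tmul.
  destruct t as [[[c w0] w1] w2]; simpl; ring.
Qed.

Definition basic_comb (f : R3 -> R3 -> C) : Prop :=
  exists L, forall xi eta, admissible xi eta -> f xi eta = tsum L xi eta.

Lemma basic_comb_ext f g :
  basic_comb g -> (forall xi eta, admissible xi eta -> f xi eta = g xi eta) -> basic_comb f.
Proof. intros [L HL] E; exists L; intros; rewrite E; auto. Qed.

Lemma basic_comb_const c : basic_comb (fun _ _ => c).
Proof. exists [(c, [], [], [])]; intros; simpl; ring. Qed.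

Lemma basic_comb_add f g :
  basic_comb f -> basic_comb g -> basic_comb (fun xi eta => (f xi eta + g xi eta)%C).
Proof. intros [L Hf] [L' Hg]; exists (L ++ L'); intros; rewrite tsum_app, Hf, Hg; auto. Qed.

Lemma basic_comb_mul f g :
  basic_comb f -> basic_comb g -> basic_comb (fun xi eta => (f xi eta * g xi eta)%C).
Proof.
  intros [L Hf] [L' Hg]; exists (flat_map (fun t => map (tmul t) L') L).
  intros; rewrite tsum_mul, Hf, Hg; auto.
Qed.

Lemma basic_comb_opp f : basic_comb f -> basic_comb (fun xi eta => (- f xi eta)%C).
Proof.
  intros Hf; apply (basic_comb_ext _ _ (basic_comb_mul _ _ (basic_comb_const (-1)%C) Hf)).
  intros; ring.
Qed.

Lemma basic_comb_sub f g :
  basic_comb f -> basic_comb g -> basic_comb (fun xi eta => (f xi eta - g xi eta)%C).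
Proof.
  intros Hf Hg; apply (basic_comb_ext _ _ (basic_comb_add _ _ Hf (basic_comb_opp _ Hg))).
  intros; ring.
Qed.

Inductive frequency_slot : (R3 -> R3 -> R3) -> Prop :=
  | slot_out : frequency_slot (fun xi _ => xi)
  | slot_diff : frequency_slot R3sub
  | slot_in : frequency_slot (fun _ eta => eta).

Lemma basic_comb_opsym pos o :
  frequency_slot pos -> basic_comb (fun xi eta => opsym o (pos xi eta)).
Proof.
  intros []; [exists [(RtoC 1, [o], [], [])] | exists [(RtoC 1, [], [o], [])]
             | exists [(RtoC 1, [], [], [o])]]; intros; simpl; ring.
Qed.

Lemma slot_admissible pos xi eta :
  frequency_slot pos -> admissible xi eta -> nrmh (pos xi eta) <> 0.
Proof. intros [] (? & ? & ?); assumption. Qed.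

Record dir := Dir { cphi : C; sphi : C; cth : C; sth : C }.

Definition dir_of (v : R3) : dir :=
  Dir (RtoC (x1 v / nrmh v)) (RtoC (x2 v / nrmh v)) (RtoC (Lam v)) (RtoC (nrmh v / nrm v)).

Definition radial (d : dir) : C3 := mkC3 (sth d * cphi d) (sth d * sphi d) (cth d).
Definition ephi (d : dir) : C3 := mkC3 (- sphi d) (cphi d) (RtoC 0).
Definition etheta (d : dir) : C3 := mkC3 (cth d * cphi d) (cth d * sphi d) (- sth d).

Lemma cdot_cscal c u w : cdot (cscal c u) w = (c * cdot u w)%C.
Proof. unfold cdot, cscal; cbn [z1 z2 z3]; ring. Qed.

Lemma cdot_toC3_sub xi eta w :
  cdot (toC3 xi) w = (cdot (toC3 (R3sub xi eta)) w + cdot (toC3 eta) w)%C.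
Proof. unfold cdot, toC3, R3sub; cbn [z1 z2 z3 x1 x2 x3]; rewrite !RtoC_minus; ring. Qed.

Lemma nrmh_sq v : nrmh v ^ 2 = x1 v ^ 2 + x2 v ^ 2.
Proof. unfold nrmh; rewrite pow2_sqrt; [reflexivity | nra]. Qed.

Lemma nrm_sq v : nrm v ^ 2 = x1 v ^ 2 + x2 v ^ 2 + x3 v ^ 2.
Proof. unfold nrm; rewrite pow2_sqrt; [reflexivity | nra]. Qed.

Lemma nrmh_le_nrm v : nrmh v <= nrm v.
Proof. apply sqrt_le_1_alt; nra. Qed.

Definition rinv_dir (s : sgn) (d : dir) : C3 :=
  cscal (- Ci)%C (cadd (ephi d) (cscal (- (RtoC (sv s) * Ci))%C (etheta d))).
Definition pl_dir (d : dir) (u : C3) : C3 :=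
  cadd u (cscal (- cdot (radial d) u)%C (radial d)).
Definition ps_dir (s : sgn) (d : dir) (w : C3) : C3 :=
  cscal (RtoC (/ 2)) (cadd w (cscal (RtoC (sv s) * Ci)%C (ccross (radial d) w))).
Definition rs_dir (s : sgn) (d : dir) (y : C3) : C :=
  (RtoC (/ 2) * (Ci * (cphi d * z2 y - sphi d * z1 y) + RtoC (sv s) * z3 y / sth d))%C.

Lemma pl_dir_z3 d u : (cth d * cth d + sth d * sth d)%C = 1%C ->
  z3 (pl_dir d u) = (sth d * (sth d * z3 u - cth d * (cphi d * z1 u + sphi d * z2 u)))%C.
Proof.
  intros Hd; unfold pl_dir, radial, cadd, cscal, cdot; cbn [z1 z2 z3].
  transitivity (z3 u * (1 - (cth d * cth d + sth d * sth d)) +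
    sth d * (sth d * z3 u - cth d * (cphi d * z1 u + sphi d * z2 u)))%C.
  - ring.
  - rewrite Hd; ring.
Qed.

Lemma ps_dir_z3 s d w :
  z3 (ps_dir s d w)
  = (RtoC (/ 2) * (z3 w + RtoC (sv s) * Ci * sth d * (cphi d * z2 w - sphi d * z1 w)))%C.
Proof. unfold ps_dir, radial, cadd, cscal, ccross; cbn [z1 z2 z3]; ring. Qed.

Definition outer_poly (s : sgn) (d : dir) (u : C3) : C :=
  let w := pl_dir d u in
  let v := ps_dir s d w in
  (RtoC (/ 2) *
   (Ci * (sphi d * z1 v - cphi d * z2 v)
    - RtoC (sv s) * RtoC (/ 2) *
      ((sth d * z3 u - cth d * (cphi d * z1 u + sphi d * z2 u))
       + RtoC (sv s) * Ci * (cphi d * z2 w - sphi d * z1 w))))%C.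

Lemma rs_dir_ps_pl s d u : sth d <> 0%C -> (cth d * cth d + sth d * sth d)%C = 1%C ->
  rs_dir s d (cscal (- RtoC 1)%C (ps_dir s d (pl_dir d u))) = outer_poly s d u.
Proof.
  intros Hs Hd; unfold rs_dir, outer_poly; cbn [z1 z2 z3 cscal].
  rewrite ps_dir_z3, (pl_dir_z3 _ _ Hd); field; exact Hs.
Qed.

Lemma outer_poly_scal s d c u : outer_poly s d (cscal c u) = (c * outer_poly s d u)%C.
Proof.
  destruct u as [u1 u2 u3].
  unfold outer_poly, pl_dir, ps_dir, radial, cadd, cscal, cdot, ccross; cbn [z1 z2 z3]; ring.
Qed.

Section Direction.
Variable v : R3.
Hypothesis Hv : nrmh v <> 0.

Let nrmh_gt0 : 0 < nrmh v.
Proof. pose proof (sqrt_pos (x1 v ^ 2 + x2 v ^ 2)); unfold nrmh in *; lra. Qed.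

Let nrm_neq0 : nrm v <> 0.
Proof. pose proof (nrmh_le_nrm v); lra. Qed.

Let Cnrm_neq0 : RtoC (nrm v) <> 0%C.
Proof. intros E; apply nrm_neq0, RtoC_inj, E. Qed.

Lemma sth_dir_neq0 : sth (dir_of v) <> 0%C.
Proof.
  intros E; apply RtoC_inj in E.
  apply (Rmult_integral_contrapositive_currified (nrmh v) (/ nrm v)) in E; auto.
  apply Rinv_neq_0_compat, nrm_neq0.
Qed.

Lemma toC3_radial : toC3 v = cscal (RtoC (nrm v)) (radial (dir_of v)).
Proof.
  unfold toC3, cscal, radial, dir_of; simpl; rewrite <- !RtoC_mult.
  f_equal; f_equal; unfold Lam; field; auto.
Qed.

Lemma nrmh_sth : RtoC (nrmh v) = (RtoC (nrm v) * sth (dir_of v))%C.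
Proof. simpl; rewrite <- RtoC_mult; f_equal; field; auto. Qed.

Lemma cphi_sphi : (cphi (dir_of v) * cphi (dir_of v) + sphi (dir_of v) * sphi (dir_of v))%C = 1%C.
Proof.
  simpl; rewrite <- !RtoC_mult, <- RtoC_plus; f_equal.
  pose proof (nrmh_sq v); field_simplify_eq; [nra | lra].
Qed.

Lemma cth_sth : (cth (dir_of v) * cth (dir_of v) + sth (dir_of v) * sth (dir_of v))%C = 1%C.
Proof.
  simpl; rewrite <- !RtoC_mult, <- RtoC_plus; f_equal; unfold Lam.
  pose proof (nrmh_sq v); pose proof (nrm_sq v).
  field_simplify_eq; [nra | auto].
Qed.

Lemma sqrt_one_minus_Lam2 : RtoC (sqrt (1 - Lam v ^ 2)) = sth (dir_of v).
Proof.
  assert (E : 1 - Lam v ^ 2 = (nrmh v / nrm v) ^ 2).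
  { unfold Lam; pose proof (nrmh_sq v); pose proof (nrm_sq v).
    field_simplify_eq; [nra | auto]. }
  unfold dir_of; cbn [sth]; rewrite E, sqrt_pow2; [reflexivity|].
  apply Rlt_le, Rdiv_lt_0_compat; [lra | pose proof (nrmh_le_nrm v); lra].
Qed.

Lemma Gam1_ephi : Gam1 v = ephi (dir_of v).
Proof. unfold Gam1, ephi; simpl; f_equal; rewrite <- RtoC_opp; f_equal; field; lra. Qed.

Lemma Gam2_etheta : Gam2 v = cscal (- RtoC 1) (etheta (dir_of v)).
Proof.
  unfold Gam2; rewrite Gam1_ephi, toC3_radial, (RtoC_inv _ nrm_neq0).
  pose proof cphi_sphi as Hphi; set (d := dir_of v) in *.
  unfold ccross, cscal, ephi, etheta, radial; cbn [z1 z2 z3]; f_equal.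
  - field; auto.
  - field; auto.
  - transitivity (sth d * (cphi d * cphi d + sphi d * sphi d))%C.
    + field; auto.
    + rewrite Hphi; ring.
Qed.

Lemma Rinv_sym_dir s : Rinv_sym s v = rinv_dir s (dir_of v).
Proof.
  unfold Rinv_sym, rinv_dir; rewrite Gam1_ephi, Gam2_etheta.
  unfold cadd, cscal; cbn [z1 z2 z3]; f_equal; f_equal; ring.
Qed.

Lemma toC3_Rinv_sym_orth s : cdot (toC3 v) (Rinv_sym s v) = 0%C.
Proof.
  unfold Rinv_sym, Gam2; rewrite Gam1_ephi, toC3_radial.
  unfold cdot, cscal, cadd, ccross, radial, ephi; cbn [z1 z2 z3]; ring.
Qed.

Lemma PL_sym_dir u : PL_sym v u = pl_dir (dir_of v) u.
Proof.
  unfold PL_sym, pl_dir; rewrite toC3_radial, RtoC_pow.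
  destruct u as [u1 u2 u3]; unfold cadd, cscal, cdot; cbn [z1 z2 z3].
  f_equal; field; exact Cnrm_neq0.
Qed.

Lemma Ps_sym_dir s w : Ps_sym s v w = ps_dir s (dir_of v) w.
Proof.
  unfold Ps_sym, ps_dir; rewrite toC3_radial, (RtoC_div _ _ nrm_neq0).
  destruct w as [w1 w2 w3]; unfold cadd, cscal, ccross; cbn [z1 z2 z3].
  f_equal; f_equal; field; exact Cnrm_neq0.
Qed.

Lemma Rs_sym_dir s y : Rs_sym s v y = rs_dir s (dir_of v) y.
Proof.
  unfold Rs_sym, rs_dir; rewrite toC3_radial, (RtoC_div _ _ Hv), RtoC_mult, nrmh_sth.
  destruct y as [y1 y2 y3]; unfold cscal, ccross, radial; cbn [z1 z2 z3].
  field; split; [exact sth_dir_neq0 | exact Cnrm_neq0].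
Qed.

End Direction.

Lemma basic_comb_cphi pos :
  frequency_slot pos -> basic_comb (fun xi eta => cphi (dir_of (pos xi eta))).
Proof.
  intros Hp; apply (basic_comb_ext _ _
    (basic_comb_mul _ _ (basic_comb_const (- Ci)%C) (basic_comb_opsym _ OD1 Hp))).
  intros; apply injective_projections; simpl; ring.
Qed.

Lemma basic_comb_sphi pos :
  frequency_slot pos -> basic_comb (fun xi eta => sphi (dir_of (pos xi eta))).
Proof.
  intros Hp; apply (basic_comb_ext _ _
    (basic_comb_mul _ _ (basic_comb_const (- Ci)%C) (basic_comb_opsym _ OD2 Hp))).
  intros; apply injective_projections; simpl; ring.
Qed.

Lemma basic_comb_cth pos :
  frequency_slot pos -> basic_comb (fun xi eta => cth (dir_of (pos xi eta))).
Proof. intros Hp; exact (basic_comb_opsym _ OLam Hp). Qed.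

Lemma basic_comb_sth pos :
  frequency_slot pos -> basic_comb (fun xi eta => sth (dir_of (pos xi eta))).
Proof.
  intros Hp; apply (basic_comb_ext _ _ (basic_comb_opsym _ OSqrt Hp)).
  intros xi eta Hadm; symmetry; apply sqrt_one_minus_Lam2, (slot_admissible _ _ _ Hp Hadm).
Qed.

Ltac basic_comb_solve :=
  repeat first
    [ apply basic_comb_const
    | apply basic_comb_cphi; first [assumption | constructor]
    | apply basic_comb_sphi; first [assumption | constructor]
    | apply basic_comb_cth; first [assumption | constructor]
    | apply basic_comb_sth; first [assumption | constructor]
    | apply basic_comb_add | apply basic_comb_sub
    | apply basic_comb_mul | apply basic_comb_opp ].

Definition outer_sym (mu : sgn) (xi : R3) (u : C3) : C :=
  Rs_sym mu xi (cscal (- RtoC 1)%C (Ps_sym mu xi (PL_sym xi u))).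

Lemma outer_sym_poly mu xi u : nrmh xi <> 0 -> outer_sym mu xi u = outer_poly mu (dir_of xi) u.
Proof.
  intros H; unfold outer_sym; rewrite PL_sym_dir, Ps_sym_dir, Rs_sym_dir by exact H.
  apply rs_dir_ps_pl; [apply sth_dir_neq0 | apply cth_sth]; exact H.
Qed.

Lemma msym_factor mu mu1 mu2 xi eta : admissible xi eta ->
  msym mu mu1 mu2 xi eta =
  (Ci * cdot (toC3 xi) (Rinv_sym mu1 (R3sub xi eta))
      * outer_poly mu (dir_of xi) (rinv_dir mu2 (dir_of eta)))%C.
Proof.
  intros (Hxi & Heta & _).
  change (msym mu mu1 mu2 xi eta) with (outer_sym mu xi
    (cscal (Ci * cdot (toC3 xi) (Rinv_sym mu1 (R3sub xi eta)))%C (Rinv_sym mu2 eta))).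
  rewrite (outer_sym_poly _ _ _ Hxi), (Rinv_sym_dir _ Heta), outer_poly_scal; reflexivity.
Qed.

Definition reduced_sym (mu mu1 mu2 : sgn) (pos : R3 -> R3 -> R3) (xi eta : R3) : C :=
  (Ci * cdot (radial (dir_of (pos xi eta))) (rinv_dir mu1 (dir_of (R3sub xi eta)))
      * outer_poly mu (dir_of xi) (rinv_dir mu2 (dir_of eta)))%C.

Lemma msym_out mu mu1 mu2 xi eta : admissible xi eta ->
  msym mu mu1 mu2 xi eta = (RtoC (nrm xi) * reduced_sym mu mu1 mu2 (fun xi _ => xi) xi eta)%C.
Proof.
  intros Hadm; rewrite (msym_factor _ _ _ _ _ Hadm).
  destruct Hadm as (Hxi & _ & Hdiff).
  rewrite (toC3_radial _ Hxi), cdot_cscal, (Rinv_sym_dir _ Hdiff).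
  unfold reduced_sym; ring.
Qed.

Lemma msym_in mu mu1 mu2 xi eta : admissible xi eta ->
  msym mu mu1 mu2 xi eta = (RtoC (nrm eta) * reduced_sym mu mu1 mu2 (fun _ eta => eta) xi eta)%C.
Proof.
  intros Hadm; rewrite (msym_factor _ _ _ _ _ Hadm).
  destruct Hadm as (_ & Heta & Hdiff).
  rewrite (cdot_toC3_sub xi eta), (toC3_Rinv_sym_orth _ Hdiff), (toC3_radial _ Heta),
    cdot_cscal, (Rinv_sym_dir _ Hdiff).
  unfold reduced_sym; ring.
Qed.

Lemma basic_comb_reduced_sym mu mu1 mu2 pos :
  frequency_slot pos -> basic_comb (reduced_sym mu mu1 mu2 pos).
Proof.
  intros Hp; unfold reduced_sym.
  cbv beta zeta iota delta [outer_poly pl_dir ps_dir rinv_dir radial ephi etheta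
    cdot cscal cadd ccross z1 z2 z3].
  basic_comb_solve.
Qed.

Theorem lemma3p8 (mu mu1 mu2 : sgn) :
  (exists L : list term, forall xi eta : R3, admissible xi eta ->
      msym mu mu1 mu2 xi eta = sum_form1 L xi eta) /\
  (exists L : list term, forall xi eta : R3, admissible xi eta ->
      msym mu mu1 mu2 xi eta = sum_form2 L xi eta).
Proof.
  split.
  - destruct (basic_comb_reduced_sym mu mu1 mu2 _ slot_out) as [L HL].
    exists L; intros xi eta Hadm.
    rewrite sum_form1_tsum, <- HL by exact Hadm; exact (msym_out _ _ _ _ _ Hadm).
  - destruct (basic_comb_reduced_sym mu mu1 mu2 _ slot_in) as [L HL].
    exists L; intros xi eta Hadm.
    rewrite sum_form2_tsum, <- HL by exact Hadm; exact (msym_in _ _ _ _ _ Hadm).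
Qed.
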